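(* Let $(b,c,d)\in\bar S$. Then $(b,c,d)$ has no inverse image under $\bar M_B$ in $\bar S$ if and only if one of the following holds: (i) $b,c,d$ are neither all even nor all odd; (ii) $b,c,d$ are all even, but $c\not\equiv 0\pmod 4$ or $d\not\equiv 0\pmod 8$; (iii) $b,c,d$ are all odd, but $-2b+c\not\equiv 1\pmod 4$ or $b-c+d\not\equiv 1\pmod 8$.
   Context: $\bar S$ is the set of all $(b,c,d)\in\mathbb{Z}^3$ with $b^2-3c\le 0$, $d<0$, $1+b+c+d>0$; for $(b,c,d)\in\bar S$, $\pi(b,c,d)$ is the unique real root (in $(0,1)$) of $x^3+bx^2+cx+d$. The map $\bar M_B:\bar S\to\bar S$ is defined by: let $\alpha=\pi(b,c,d)$; if $\alpha\in(0,1/2)$ then $\bar M_B(b,c,d)=(2b,4c,8d)$, and if $\alpha\in(1/2,1)$ then $\bar M_B(b,c,d)=(2b+3,\,4b+4c+3,\,2b+4c+8d+1)$. (This is the conjugate $\pi^{-1}\circ M_B\circ\pi$ of the Bernoulli map $M_B(x)=2x\bmod 1$.) *)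

From Stdlib Require Import Reals ZArith ClassicalEpsilon.
Open Scope Z_scope.

Definition Sbar (t : Z * Z * Z) : Prop :=
  let '(b, c, d) := t in b ^ 2 - 3 * c <= 0 /\ d < 0 /\ 1 + b + c + d > 0.

Definition cubic (b c d : Z) (x : R) : R :=
  (x ^ 3 + IZR b * x ^ 2 + IZR c * x + IZR d)%R.

(* pi(b,c,d): the (unique) real root of the cubic, which lies in (0,1)
   for (b,c,d) in \bar S; chosen by Hilbert's epsilon. *)
Definition pi (b c d : Z) : R :=
  epsilon (inhabits 0%R) (fun x => (0 < x < 1)%R /\ cubic b c d x = 0%R).

Definition MbarB (t : Z * Z * Z) : Z * Z * Z :=
  let '(b, c, d) := t in
  if Rlt_dec (pi b c d) (1 / 2)%R then (2 * b, 4 * c, 8 * d)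
  else (2 * b + 3, 4 * b + 4 * c + 3, 2 * b + 4 * c + 8 * d + 1).

(* The cubic of a triple in [Sbar] is strictly increasing (its derivative has
   discriminant 4(b^2 - 3c) <= 0), so [Sbar] is exactly the set of triples with
   b^2 - 3c <= 0 whose cubic has a root in (0,1), and that root is [pi].  The two
   branches of [MbarB] rescale the cubic: the lower branch sends the root a to 2a,
   the upper one to 2a - 1, and both multiply b^2 - 3c by 4.  Hence a triple of
   [Sbar] has a preimage iff it is the branch image of some integer triple, and
   the congruences (ii), (iii) say exactly when the branch equations are solvable. *)
From Stdlib Require Import Reals ZArith.
From Stdlib Require Import Lra Lia Psatz ClassicalEpsilon Classical.
Open Scope Z_scope.

Definition lower_branch (b c d : Z) : Z * Z * Z := (2 * b, 4 * c, 8 * d).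

Definition upper_branch (b c d : Z) : Z * Z * Z :=
  (2 * b + 3, 4 * b + 4 * c + 3, 2 * b + 4 * c + 8 * d + 1).

Lemma MbarB_branches (b c d : Z) :
  MbarB (b, c, d) =
  if Rlt_dec (pi b c d) (1 / 2) then lower_branch b c d else upper_branch b c d.
Proof. reflexivity. Qed.

Lemma cubic_continuous (b c d : Z) : continuity (cubic b c d).
Proof. unfold cubic; reg. Qed.

Lemma cubic_at_0 (b c d : Z) : cubic b c d 0 = IZR d.
Proof. unfold cubic; ring. Qed.

Lemma cubic_at_1 (b c d : Z) : cubic b c d 1 = IZR (1 + b + c + d).
Proof. unfold cubic; rewrite !plus_IZR; ring. Qed.

Lemma cubic_strictly_increasing (b c d : Z) (x y : R) :
  b ^ 2 - 3 * c <= 0 -> (x < y)%R -> (cubic b c d x < cubic b c d y)%R.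
Proof.
  intros Hdisc Hxy.
  assert (Hdisc_R : (IZR b * IZR b - 3 * IZR c <= 0)%R).
  { assert (b * b - 3 * c <= 0) as H by nia.
    apply IZR_le in H; rewrite minus_IZR, !mult_IZR in H; lra. }
  unfold cubic; set (B := IZR b) in *; set (C := IZR c) in *.
  (* cubic y - cubic x = (y - x) * q, and completing the square shows q > 0 *)
  assert (Hq : (0 < y*y + x*y + x*x + B*(x+y) + C)%R).
  { replace (y*y + x*y + x*x + B*(x+y) + C)%R
      with (3/4*(x+y+2*B/3)*(x+y+2*B/3) + 1/4*(x-y)*(x-y) + (C - B*B/3))%R by field.
    pose proof (Rle_0_sqr (x+y+2*B/3)) as Hsq; unfold Rsqr in Hsq.
    assert (0 < (x-y)*(x-y))%R by (apply Rmult_neg_neg; lra).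
    lra. }
  assert (Hprod : (0 < (y - x) * (y*y + x*y + x*x + B*(x+y) + C))%R)
    by (apply Rmult_lt_0_compat; lra).
  nra.
Qed.

Lemma cubic_root_unique (b c d : Z) (x y : R) : b ^ 2 - 3 * c <= 0 ->
  cubic b c d x = 0%R -> cubic b c d y = 0%R -> x = y.
Proof.
  intros Hdisc Hx Hy.
  destruct (Rtotal_order x y) as [Hlt|[Heq|Hgt]]; [|exact Heq|].
  - pose proof (cubic_strictly_increasing b c d x y Hdisc Hlt); lra.
  - pose proof (cubic_strictly_increasing b c d y x Hdisc Hgt); lra.
Qed.

Lemma Sbar_of_root (b c d : Z) (y : R) : b ^ 2 - 3 * c <= 0 ->
  (0 < y < 1)%R -> cubic b c d y = 0%R -> Sbar (b, c, d).
Proof.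
  intros Hdisc [Hy0 Hy1] Hroot.
  pose proof (cubic_strictly_increasing b c d 0 y Hdisc Hy0) as H0.
  pose proof (cubic_strictly_increasing b c d y 1 Hdisc Hy1) as H1.
  rewrite cubic_at_0 in H0; rewrite cubic_at_1 in H1.
  split; [exact Hdisc|]; split.
  - apply lt_IZR; lra.
  - apply Z.lt_gt, lt_IZR; lra.
Qed.

Lemma pi_spec (b c d : Z) : Sbar (b, c, d) ->
  (0 < pi b c d < 1)%R /\ cubic b c d (pi b c d) = 0%R.
Proof.
  intros [_ [Hd H1]]; unfold pi; apply epsilon_spec.
  assert (A0 : (cubic b c d 0 < 0)%R) by (rewrite cubic_at_0; apply IZR_lt; lia).
  assert (A1 : (0 < cubic b c d 1)%R) by (rewrite cubic_at_1; apply IZR_lt; lia).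
  destruct (IVT (cubic b c d) 0 1 (cubic_continuous b c d) Rlt_0_1 A0 A1)
    as [z [[Hz0 Hz1] Hz]].
  exists z; split; [|exact Hz].
  split.
  - destruct Hz0 as [Hlt | Heq]; [exact Hlt | subst; lra].
  - destruct Hz1 as [Hlt | Heq]; [exact Hlt | subst; lra].
Qed.

Lemma pi_unique (b c d : Z) (x : R) : Sbar (b, c, d) ->
  cubic b c d x = 0%R -> pi b c d = x.
Proof.
  intros Hs Hx; destruct (pi_spec b c d Hs) as [_ Hpi].
  destruct Hs as [Hdisc _]; exact (cubic_root_unique b c d _ _ Hdisc Hpi Hx).
Qed.

Lemma Sbar_lower_branch (b c d : Z) : Sbar (lower_branch b c d) ->
  Sbar (b, c, d) /\ pi b c d = (pi (2 * b) (4 * c) (8 * d) / 2)%R.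
Proof.
  intros Hs; destruct (pi_spec _ _ _ Hs) as [Hrange Hroot].
  set (a := pi (2 * b) (4 * c) (8 * d)) in *.
  assert (Hdisc : b ^ 2 - 3 * c <= 0) by (destruct Hs; nia).
  assert (Hroot' : cubic b c d (a / 2) = 0%R).
  { unfold cubic in *; rewrite !mult_IZR in Hroot; nra. }
  assert (HS : Sbar (b, c, d)) by (apply (Sbar_of_root _ _ _ (a / 2)); auto; lra).
  split; [exact HS | exact (pi_unique _ _ _ _ HS Hroot')].
Qed.

Lemma Sbar_upper_branch (b c d : Z) : Sbar (upper_branch b c d) ->
  Sbar (b, c, d) /\
  pi b c d = ((pi (2 * b + 3) (4 * b + 4 * c + 3) (2 * b + 4 * c + 8 * d + 1) + 1) / 2)%R.
Proof.
  intros Hs; destruct (pi_spec _ _ _ Hs) as [Hrange Hroot].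
  set (a := pi (2 * b + 3) _ _) in *.
  assert (Hdisc : b ^ 2 - 3 * c <= 0) by (destruct Hs; nia).
  assert (Hroot' : cubic b c d ((a + 1) / 2) = 0%R).
  { unfold cubic in *; rewrite !plus_IZR, !mult_IZR in Hroot; nra. }
  assert (HS : Sbar (b, c, d)) by (apply (Sbar_of_root _ _ _ ((a + 1) / 2)); auto; lra).
  split; [exact HS | exact (pi_unique _ _ _ _ HS Hroot')].
Qed.

Lemma MbarB_preimage_iff (t : Z * Z * Z) : Sbar t ->
  (exists p, Sbar p /\ MbarB p = t) <->
  (exists b c d, lower_branch b c d = t) \/ (exists b c d, upper_branch b c d = t).
Proof.
  intros Hs; split.
  - intros [[[b c] d] [_ <-]]; rewrite MbarB_branches.
    destruct (Rlt_dec _ _); [left | right]; eauto.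
  - intros [[b [c [d <-]]] | [b [c [d <-]]]]; exists (b, c, d); rewrite MbarB_branches.
    + destruct (Sbar_lower_branch b c d Hs) as [HS ->].
      destruct (pi_spec _ _ _ Hs) as [Hrange _].
      split; [exact HS|]; destruct (Rlt_dec _ _); [reflexivity | lra].
    + destruct (Sbar_upper_branch b c d Hs) as [HS ->].
      destruct (pi_spec _ _ _ Hs) as [Hrange _].
      split; [exact HS|]; destruct (Rlt_dec _ _); [lra | reflexivity].
Qed.

Lemma lower_branch_image_iff (b c d : Z) :
  (exists b' c' d', lower_branch b' c' d' = (b, c, d)) <->
  (Z.Even b /\ Z.Even c /\ Z.Even d) /\ (c mod 4 = 0 /\ d mod 8 = 0).
Proof.
  unfold lower_branch; split.
  - intros [b' [c' [d' E]]]; rewrite !pair_equal_spec in E; destruct E as [[<- <-] <-].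
    split; [split; [|split]; [exists b' | exists (2 * c') | exists (4 * d')] |];
      Z.div_mod_to_equations; lia.
  - intros [[[b' ->] _] [Hc Hd]].
    exists b', (c / 4), (d / 8); f_equal; [f_equal|]; Z.div_mod_to_equations; lia.
Qed.

Lemma upper_branch_image_iff (b c d : Z) :
  (exists b' c' d', upper_branch b' c' d' = (b, c, d)) <->
  (Z.Odd b /\ Z.Odd c /\ Z.Odd d) /\
  ((-2 * b + c) mod 4 = 1 /\ (b - c + d) mod 8 = 1).
Proof.
  unfold upper_branch; split.
  - intros [b' [c' [d' E]]]; rewrite !pair_equal_spec in E; destruct E as [[<- <-] <-].
    split; [split; [|split]; [exists (b' + 1) | exists (2 * b' + 2 * c' + 1)
                              | exists (b' + 2 * c' + 4 * d')] |];
      Z.div_mod_to_equations; lia.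
  - intros [[[k ->] _] [Hc Hd]].
    exists (k - 1), ((-2 * (2 * k + 1) + c) / 4 + 1), ((2 * k + 1 - c + d) / 8).
    f_equal; [f_equal|]; Z.div_mod_to_equations; lia.
Qed.

Lemma not_or_exclusive (P Q X Y : Prop) : (P -> ~ Q) ->
  ~ (P /\ X \/ Q /\ Y) <-> ~ (P \/ Q) \/ (P /\ ~ X) \/ (Q /\ ~ Y).
Proof.
  intros Hexcl; destruct (classic P), (classic Q), (classic X), (classic Y); tauto.
Qed.

Theorem fact2 (b c d : Z) (Hs : Sbar (b, c, d)) :
  (~ exists p : Z * Z * Z, Sbar p /\ MbarB p = (b, c, d)) <->
  ( (* (i) neither all even nor all odd *)
    ~ ((Z.Even b /\ Z.Even c /\ Z.Even d) \/ (Z.Odd b /\ Z.Odd c /\ Z.Odd d))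
  \/ (* (ii) *)
    ((Z.Even b /\ Z.Even c /\ Z.Even d) /\ (c mod 4 <> 0 \/ d mod 8 <> 0))
  \/ (* (iii) *)
    ((Z.Odd b /\ Z.Odd c /\ Z.Odd d) /\
     ((-2 * b + c) mod 4 <> 1 \/ (b - c + d) mod 8 <> 1))).
Proof.
  rewrite (MbarB_preimage_iff _ Hs), lower_branch_image_iff, upper_branch_image_iff.
  rewrite not_or_exclusive by (intros [[k Hk] _] [[l Hl] _]; lia).
  assert (Hneg : forall x y m n : Z, ~ (x = m /\ y = n) <-> x <> m \/ y <> n) by lia.
  rewrite !Hneg; reflexivity.
Qed.
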